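(* Let $\dot E=(E,(C,S),(D,T))$ be a bi-separated graph with distinguished subsets. If $\dot E$ is tame, then $\dot E$ is the direct limit (union) of a directed family of finite complete sub-objects of $\dot E$. Conversely, if $\dot E$ is the direct limit (union) of a directed family of finite complete sub-objects, then $\dot E$ is tame.
   Context: A graph $E=(E^0,E^1,r,s)$ has vertex set $E^0$, edge set $E^1$, range and source maps $r,s:E^1\to E^0$. A bi-separated graph with distinguished subsets is $\dot E=(E,(C,S),(D,T))$ where: $C=\bigsqcup_{v}C_v$ with $C_v$ a partition of $s^{-1}(v)$ into nonempty subsets for each non-sink $v$; $D=\bigsqcup_v D_v$ with $D_v$ a partition of $r^{-1}(v)$ into nonempty subsets for each non-source $v$; $|X\cap Y|\le 1$ for all $X\in C$, $Y\in D$; $C_{\rm fin}=\{X\in C:|X|<\infty\}$, $D_{\rm fin}=\{Y\in D:|Y|<\infty\}$, and $S\subseteq C_{\rm fin}$, $T\subseteq D_{\rm fin}$. A complete sub-object of $\dot E$ is given by a subgraph $E'$ of $E$ (i.e. $(E')^0\subseteq E^0$, $(E')^1\subseteq E^1$ with $s(e),r(e)\in (E')^0$ for $e\in(E')^1$) such that every $X\in S$ with $X\cap (E')^1\neq\emptyset$ satisfies $X\subseteq (E')^1$ and every $Y\in T$ with $Y\cap(E')^1\ne\emptyset$ satisfies $Y\subseteq (E')^1$, equipped with $C'=\{X\cap(E')^1: X\in C\setminus S,\ X\cap (E')^1\neq\emptyset\}\sqcup S'$, $S'=\{X\in S: X\cap(E')^1\neq\emptyset\}$, $D'=\{Y\cap(E')^1:Y\in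 D\setminus T,\ Y\cap(E')^1\ne\emptyset\}\sqcup T'$, $T'=\{Y\in T:Y\cap (E')^1\neq\emptyset\}$. It is finite if $(E')^0$ and $(E')^1$ are finite. A family of complete sub-objects is directed if any two are contained in a third (as subgraphs); $\dot E$ is its direct limit (union) if every vertex and every edge of $E$ lies in some member of the family. Tameness: let $S_1=\{X\in S: X\cap Y\neq\emptyset \text{ for some } Y\in T\}$ and $T_1=\{Y\in T: X\cap Y\ne\emptyset\text{ for some }X\in S\}$. On $S_1$ define $X\sim_T X'$ if $X=X'$ or there is a sequence $X_0,Y_1,X_1,\dots,Y_n,X_n$ with $X_i\in S$, $Y_i\in T$, $X_0=X$, $X_n=X'$, $X_{i-1}\cap Y_i\ne\emptyset$ and $Y_i\cap X_i\neq\emptyset$ for all $i$; define $\sim_S$ on $T_1$ symmetrically (sequences $Y_0,X_1,Y_1,\dots$ with consecutive members intersecting). These are equivalence relations. $\dot E$ is tame if every $\sim_T$-class in $S_1$ and every $\sim_S$-class in $T_1$ is finite. *)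

From Stdlib Require Import List Relations.
Import ListNotations.

Definition fin_pred {A : Type} (P : A -> Prop) : Prop :=
  exists l : list A, forall a, P a -> In a l.

(* The partition C (resp. D) of the edges is given by a labelling
   cC : Ed -> IC (resp. cD : Ed -> ID): the members of C are the fibres
   X = cC^{-1}(i), i : IC (cC surjective, so every member is nonempty and
   distinct indices give distinct members).  Edges in the same C-member
   have the same source, so C restricts to a partition C_v of s^{-1}(v)
   for every non-sink v; symmetrically for D and ranges. *)
Record BiSepGraph := {
  V : Type;
  Ed : Type;
  src : Ed -> V;
  rng : Ed -> V;
  IC : Type;
  ID : Type;
  cC : Ed -> IC;
  cD : Ed -> ID;
  cC_surj : forall X : IC, exists e, cC e = X;
  cD_surj : forall Y : ID, exists e, cD e = Y;
  cC_src : forall e e', cC e = cC e' -> src e = src e';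
  cD_rng : forall e e', cD e = cD e' -> rng e = rng e';
  CD_inter : forall e e', cC e = cC e' -> cD e = cD e' -> e = e';
  S : IC -> Prop;
  T : ID -> Prop;
  S_fin : forall X, S X -> fin_pred (fun e => cC e = X);
  T_fin : forall Y, T Y -> fin_pred (fun e => cD e = Y)
}.

Arguments src {_} _. Arguments rng {_} _. Arguments cC {_} _. Arguments cD {_} _.
Arguments S {_} _. Arguments T {_} _.

Definition meets (G : BiSepGraph) (X : IC G) (Y : ID G) : Prop :=
  exists e, cC e = X /\ cD e = Y.

Definition stepT (G : BiSepGraph) (X X' : IC G) : Prop :=
  S X /\ S X' /\ exists Y, T Y /\ meets G X Y /\ meets G X' Y.

Definition stepS (G : BiSepGraph) (Y Y' : ID G) : Prop :=
  T Y /\ T Y' /\ exists X, S X /\ meets G X Y /\ meets G X Y'.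

Definition S1 (G : BiSepGraph) (X : IC G) : Prop :=
  S X /\ exists Y, T Y /\ meets G X Y.
Definition T1 (G : BiSepGraph) (Y : ID G) : Prop :=
  T Y /\ exists X, S X /\ meets G X Y.

Definition simT (G : BiSepGraph) : relation (IC G) := clos_refl_trans _ (stepT G).
Definition simS (G : BiSepGraph) : relation (ID G) := clos_refl_trans _ (stepS G).

Definition tame (G : BiSepGraph) : Prop :=
  (forall X, S1 G X -> fin_pred (fun X' => simT G X X')) /\
  (forall Y, T1 G Y -> fin_pred (fun Y' => simS G Y Y')).

Record subgraph (G : BiSepGraph) := {
  sV : V G -> Prop;
  sE : Ed G -> Prop;
  sE_src : forall e, sE e -> sV (src e);
  sE_rng : forall e, sE e -> sV (rng e)
}.
Arguments sV {_} _ _. Arguments sE {_} _ _.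

Definition complete_sub (G : BiSepGraph) (H : subgraph G) : Prop :=
  (forall X, S X -> (exists e, cC e = X /\ sE H e) ->
     forall e, cC e = X -> sE H e) /\
  (forall Y, T Y -> (exists e, cD e = Y /\ sE H e) ->
     forall e, cD e = Y -> sE H e).

Definition finite_sub (G : BiSepGraph) (H : subgraph G) : Prop :=
  fin_pred (sV H) /\ fin_pred (sE H).

Definition sub_le (G : BiSepGraph) (H K : subgraph G) : Prop :=
  (forall v, sV H v -> sV K v) /\ (forall e, sE H e -> sE K e).

Definition union_of_finite_complete (G : BiSepGraph) : Prop :=
  exists (I : Type) (F : I -> subgraph G),
    inhabited I /\
    (forall i, complete_sub G (F i) /\ finite_sub G (F i)) /\
    (forall i j, exists k, sub_le G (F i) (F k) /\ sub_le G (F j) (F k)) /\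
    (forall v, exists i, sV (F i) v) /\
    (forall e, exists i, sE (F i) e).

(* Converse direction: a complete sub-object H is closed along ~_T and ~_S
   chains, in the sense that if H contains an edge of X and X ~_T X', then H
   contains an edge of X'.  So if H is finite and contains an edge of X, the
   ~_T class of X is bounded by the (finite) set of C-members of edges of H.

   Direct direction: call two edges adjacent when they lie in a common member
   of S or of T.  The set of edges reachable from an edge e by adjacency
   spans a complete sub-object, and tameness makes it finite: every such edge
   other than e lies in a member of S that is ~_T-related to one of finitely
   many "root" members determined by e, or dually in a member of T.  The
   family of all finite complete sub-objects is then closed under binary
   unions and contains every vertex (as a one-vertex sub-object) and every
   edge (via its adjacency component), which gives the direct limit. *)

From Stdlib Require Import List Relations Classical.
Import ListNotations.

Lemma fin_pred_weaken {A : Type} (P Q : A -> Prop) :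
  fin_pred P -> (forall a, Q a -> P a) -> fin_pred Q.
Proof. intros [l Hl] HQP. exists l. auto. Qed.

Lemma fin_pred_union {A : Type} (P Q : A -> Prop) :
  fin_pred P -> fin_pred Q -> fin_pred (fun a => P a \/ Q a).
Proof.
  intros [l Hl] [m Hm]. exists (l ++ m).
  intros a [Ha | Ha]; apply in_or_app; auto.
Qed.

Lemma fin_pred_single {A : Type} (x : A) : fin_pred (fun a => a = x).
Proof. exists [x]. intros a ->. now left. Qed.

Lemma fin_pred_guard {A : Type} (P0 : Prop) (Q : A -> Prop) :
  (P0 -> fin_pred Q) -> fin_pred (fun a => P0 /\ Q a).
Proof.
  intros HQ. destruct (classic P0) as [H0 | H0].
  - apply fin_pred_weaken with Q; [auto | tauto].
  - exists []. tauto.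
Qed.

Lemma fin_pred_bind {A B : Type} (P : A -> Prop) (Q : A -> B -> Prop) :
  fin_pred P -> (forall a, P a -> fin_pred (Q a)) ->
  fin_pred (fun b => exists a, P a /\ Q a b).
Proof.
  intros [l Hl] HQ.
  assert (Hlist : forall l', exists m,
             forall a b, In a l' -> P a -> Q a b -> In b m).
  { induction l' as [| x l' [m Hm]].
    - exists []. intros a b [].
    - destruct (classic (P x)) as [Px | nPx].
      + destruct (HQ x Px) as [m' Hm']. exists (m' ++ m).
        intros a b [<- | Ha] Pa Qab; apply in_or_app; eauto.
      + exists m. intros a b [<- | Ha] Pa Qab; [contradiction | eauto]. }
  destruct (Hlist l) as [m Hm]. exists m. intros b [a [Pa Qab]]. eauto.
Qed.

Lemma fin_pred_image {A B : Type} (P : A -> Prop) (f : A -> B) :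
  fin_pred P -> fin_pred (fun b => exists a, P a /\ f a = b).
Proof.
  intros HP. apply fin_pred_bind; [exact HP |].
  intros a _. apply fin_pred_weaken with (fun b => b = f a);
    [apply fin_pred_single | auto].
Qed.

Section CompleteSubobjects.
Variables (G : BiSepGraph) (H : subgraph G).
Hypothesis H_complete : complete_sub G H.

(* A complete sub-object containing an edge of X contains an edge of every
   member of the ~_T class of X: each chain step passes through a member of
   T, which it must contain entirely. *)
Lemma complete_sub_simT (X X' : IC G) : simT G X X' ->
  (exists g, cC g = X /\ sE H g) -> exists g, cC g = X' /\ sE H g.
Proof.
  destruct H_complete as [HS HT].
  induction 1 as [X X' [SX [SX' [Y [TY [[h [hX hY]] [k [kX' kY]]]]]]] | | ]; auto.
  intros HX. exists k. split; [exact kX' |].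
  apply (HT Y TY); [| exact kY]. exists h. split; [exact hY |].
  exact (HS X SX HX h hX).
Qed.

Lemma complete_sub_simS (Y Y' : ID G) : simS G Y Y' ->
  (exists g, cD g = Y /\ sE H g) -> exists g, cD g = Y' /\ sE H g.
Proof.
  destruct H_complete as [HS HT].
  induction 1 as [Y Y' [TY [TY' [X [SX [[h [hX hY]] [k [kX kY']]]]]]] | | ]; auto.
  intros HY. exists k. split; [exact kY' |].
  apply (HS X SX); [| exact kX]. exists h. split; [exact hX |].
  exact (HT Y TY HY h hY).
Qed.

End CompleteSubobjects.

Lemma union_tame (G : BiSepGraph) : union_of_finite_complete G -> tame G.
Proof.
  intros [I [F [_ [HF [_ [_ Hedges]]]]]]. split.
  - intros X _. destruct (cC_surj G X) as [f <-].
    destruct (Hedges f) as [i Hfi]. destruct (HF i) as [Hc [_ Hfin]].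
    apply fin_pred_weaken with (fun X' => exists g, sE (F i) g /\ cC g = X').
    { exact (fin_pred_image _ _ Hfin). }
    intros X' HX'. destruct (complete_sub_simT G (F i) Hc _ _ HX') as [g [? ?]];
      eauto.
  - intros Y _. destruct (cD_surj G Y) as [f <-].
    destruct (Hedges f) as [i Hfi]. destruct (HF i) as [Hc [_ Hfin]].
    apply fin_pred_weaken with (fun Y' => exists g, sE (F i) g /\ cD g = Y').
    { exact (fin_pred_image _ _ Hfin). }
    intros Y' HY'. destruct (complete_sub_simS G (F i) Hc _ _ HY') as [g [? ?]];
      eauto.
Qed.

Section AdjacencyComponent.
Variable G : BiSepGraph.

Definition adj (g h : Ed G) : Prop :=
  (S (cC g) /\ cC g = cC h) \/ (T (cD g) /\ cD g = cD h).

Lemma simT_refl_or_S1 (X0 X : IC G) : simT G X0 X -> X = X0 \/ S1 G X0.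
Proof.
  intros HX. apply clos_rt_rt1n in HX.
  destruct HX as [| X1 X2 [SX0 [_ [Y [TY [M _]]]]] _]; [now left |].
  right. split; eauto.
Qed.

Lemma simS_refl_or_T1 (Y0 Y : ID G) : simS G Y0 Y -> Y = Y0 \/ T1 G Y0.
Proof.
  intros HY. apply clos_rt_rt1n in HY.
  destruct HY as [| Y1 Y2 [TY0 [_ [X [SX [M _]]]]] _]; [now left |].
  right. split; eauto.
Qed.

Lemma tame_simT_fin (X0 : IC G) : tame G -> fin_pred (simT G X0).
Proof.
  intros [HT _]. destruct (classic (S1 G X0)) as [H1 | H1]; [auto |].
  apply fin_pred_weaken with (fun X => X = X0); [apply fin_pred_single |].
  intros X HX. destruct (simT_refl_or_S1 _ _ HX); tauto.
Qed.

Lemma tame_simS_fin (Y0 : ID G) : tame G -> fin_pred (simS G Y0).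
Proof.
  intros [_ HS]. destruct (classic (T1 G Y0)) as [H1 | H1]; [auto |].
  apply fin_pred_weaken with (fun Y => Y = Y0); [apply fin_pred_single |].
  intros Y HY. destruct (simS_refl_or_T1 _ _ HY); tauto.
Qed.

Lemma simT_to_simS (X0 X : IC G) (Y : ID G) : simT G X0 X -> T Y -> meets G X Y ->
  exists Y0, T Y0 /\ meets G X0 Y0 /\ simS G Y0 Y.
Proof.
  intros HX. apply clos_rt_rt1n in HX.
  induction HX as [X | X1 X2 X [SX1 [SX2 [Y' [TY' [M1 M2]]]]] _ IH];
    intros TY M.
  - exists Y. repeat split; auto. apply rt_refl.
  - destruct (IH TY M) as [Y0 [TY0 [M0 HY0]]]. exists Y'.
    repeat split; auto. eapply rt_trans; [apply rt_step | exact HY0].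
    repeat split; auto. exists X2. auto.
Qed.

Lemma simS_to_simT (Y0 Y : ID G) (X : IC G) : simS G Y0 Y -> S X -> meets G X Y ->
  exists X0, S X0 /\ meets G X0 Y0 /\ simT G X0 X.
Proof.
  intros HY. apply clos_rt_rt1n in HY.
  induction HY as [Y | Y1 Y2 Y [TY1 [TY2 [X' [SX' [M1 M2]]]]] _ IH];
    intros SX M.
  - exists X. repeat split; auto. apply rt_refl.
  - destruct (IH SX M) as [X0 [SX0 [M0 HX0]]]. exists X'.
    repeat split; auto. eapply rt_trans; [apply rt_step | exact HX0].
    repeat split; auto. exists Y2. auto.
Qed.

Section FromEdge.
Variable e : Ed G.

(* The members of S (resp. T) the component of e enters first: the one
   containing e, and those meeting the member of T (resp. S) containing e. *)
Definition rootS (X : IC G) : Prop :=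
  S X /\ (cC e = X \/ (T (cD e) /\ meets G X (cD e))).
Definition rootT (Y : ID G) : Prop :=
  T Y /\ (cD e = Y \/ (S (cC e) /\ meets G (cC e) Y)).

Definition reachS (X : IC G) : Prop :=
  S X /\ exists X0, rootS X0 /\ simT G X0 X.
Definition reachT (Y : ID G) : Prop :=
  T Y /\ exists Y0, rootT Y0 /\ simS G Y0 Y.

(* The invariant of the adjacency component of e: the distinguished members
   through an edge are reached from the roots. *)
Definition controlled (g : Ed G) : Prop :=
  (S (cC g) -> reachS (cC g)) /\ (T (cD g) -> reachT (cD g)).

Lemma controlled_root : controlled e.
Proof.
  split; intros He; split; auto.
  - exists (cC e). split; [split; auto | apply rt_refl].
  - exists (cD e). split; [split; auto | apply rt_refl].
Qed.

(* Through an edge h, a reached member of S leads to a reached member of T: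
   the ~_T chain from a root to cC h turns into a ~_S chain to cD h. *)
Lemma reachS_reachT (h : Ed G) : reachS (cC h) -> T (cD h) -> reachT (cD h).
Proof.
  intros [Sh [X0 [[SX0 Hroot] HX0]]] Th. split; [exact Th |].
  destruct (simT_to_simS _ _ (cD h) HX0 Th) as [Y0 [TY0 [M0 HY0]]];
    [exists h; auto |].
  destruct Hroot as [<- | [Te Me]].
  - exists Y0. repeat split; auto.
  - exists (cD e). split; [split; auto |].
    eapply rt_trans; [apply rt_step | exact HY0].
    repeat split; auto. exists X0. auto.
Qed.

Lemma reachT_reachS (h : Ed G) : reachT (cD h) -> S (cC h) -> reachS (cC h).
Proof.
  intros [Th [Y0 [[TY0 Hroot] HY0]]] Sh. split; [exact Sh |].
  destruct (simS_to_simT _ _ (cC h) HY0 Sh) as [X0 [SX0 [M0 HX0]]];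
    [exists h; auto |].
  destruct Hroot as [<- | [Se Me]].
  - exists X0. repeat split; auto.
  - exists (cC e). split; [split; auto |].
    eapply rt_trans; [apply rt_step | exact HX0].
    repeat split; auto. exists Y0. auto.
Qed.

Lemma controlled_adj (g h : Ed G) : controlled g -> adj g h -> controlled h.
Proof.
  intros [Hg_S Hg_T] [[Sg Egh] | [Tg Egh]].
  - assert (Hh : reachS (cC h)) by (rewrite <- Egh; auto).
    split; [auto | intros Th; exact (reachS_reachT h Hh Th)].
  - assert (Hh : reachT (cD h)) by (rewrite <- Egh; auto).
    split; [intros Sh; exact (reachT_reachS h Hh Sh) | auto].
Qed.

Lemma controlled_propagate (g h : Ed G) :
  clos_refl_trans _ adj g h -> controlled g -> controlled h.
Proof. induction 1; eauto using controlled_adj. Qed.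

Lemma component_shape (h : Ed G) : clos_refl_trans _ adj e h ->
  h = e \/ reachS (cC h) \/ reachT (cD h).
Proof.
  intros Hh. apply clos_rt_rtn1 in Hh.
  destruct Hh as [| g h Hgh Hg]; [now left | right].
  assert (Hctrl : controlled g).
  { apply clos_rtn1_rt in Hg.
    exact (controlled_propagate _ _ Hg controlled_root). }
  destruct Hctrl as [Hg_S Hg_T].
  destruct Hgh as [[Sg <-] | [Tg <-]]; auto.
Qed.

(* There are finitely many roots, as distinguished members are finite. *)
Lemma rootS_fin : fin_pred rootS.
Proof.
  apply fin_pred_weaken with
    (fun X => X = cC e \/ exists f, (T (cD e) /\ cD f = cD e) /\ cC f = X).
  - apply fin_pred_union; [apply fin_pred_single |].
    apply fin_pred_image, fin_pred_guard. intros Te. exact (T_fin G _ Te).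
  - intros X [_ [<- | [Te [f [fX fY]]]]]; [now left | right; eauto].
Qed.

Lemma rootT_fin : fin_pred rootT.
Proof.
  apply fin_pred_weaken with
    (fun Y => Y = cD e \/ exists f, (S (cC e) /\ cC f = cC e) /\ cD f = Y).
  - apply fin_pred_union; [apply fin_pred_single |].
    apply fin_pred_image, fin_pred_guard. intros Se. exact (S_fin G _ Se).
  - intros Y [_ [<- | [Se [f [fX fY]]]]]; [now left | right; eauto].
Qed.

Hypothesis G_tame : tame G.

Lemma reachS_fin : fin_pred reachS.
Proof.
  apply fin_pred_weaken with (fun X => exists X0, rootS X0 /\ simT G X0 X).
  - apply fin_pred_bind; [exact rootS_fin |]. intros X0 _. exact (tame_simT_fin X0 G_tame).
  - intros X [_ HX]. exact HX.
Qed.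

Lemma reachT_fin : fin_pred reachT.
Proof.
  apply fin_pred_weaken with (fun Y => exists Y0, rootT Y0 /\ simS G Y0 Y).
  - apply fin_pred_bind; [exact rootT_fin |]. intros Y0 _. exact (tame_simS_fin Y0 G_tame).
  - intros Y [_ HY]. exact HY.
Qed.

Lemma component_fin : fin_pred (clos_refl_trans _ adj e).
Proof.
  apply fin_pred_weaken with (fun h => h = e \/
    (exists X, reachS X /\ cC h = X) \/ (exists Y, reachT Y /\ cD h = Y)).
  - apply fin_pred_union; [apply fin_pred_single |].
    apply fin_pred_union; apply fin_pred_bind.
    + exact reachS_fin.
    + intros X [SX _]. exact (S_fin G X SX).
    + exact reachT_fin.
    + intros Y [TY _]. exact (T_fin G Y TY).
  - intros h Hh. destruct (component_shape h Hh) as [? | [? | ?]]; eauto.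
Qed.

End FromEdge.
End AdjacencyComponent.

Section FiniteCompleteSubobjects.
Variable G : BiSepGraph.

Definition finite_complete (H : subgraph G) : Prop :=
  complete_sub G H /\ finite_sub G H.

Definition edge_sub (Z : Ed G -> Prop) : subgraph G := {|
  sV := fun v => exists g, Z g /\ (src g = v \/ rng g = v);
  sE := Z;
  sE_src := fun g Hg => ex_intro _ g (conj Hg (or_introl eq_refl));
  sE_rng := fun g Hg => ex_intro _ g (conj Hg (or_intror eq_refl)) |}.

Definition vertex_sub (P : V G -> Prop) : subgraph G := {|
  sV := P;
  sE := fun _ => False;
  sE_src := fun g (Hg : False) => match Hg with end;
  sE_rng := fun g (Hg : False) => match Hg with end |}.

Definition union_sub (H K : subgraph G) : subgraph G := {|
  sV := fun v => sV H v \/ sV K v;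
  sE := fun g => sE H g \/ sE K g;
  sE_src := fun g Hg => match Hg with
                        | or_introl HgH => or_introl (sE_src G H g HgH)
                        | or_intror HgK => or_intror (sE_src G K g HgK)
                        end;
  sE_rng := fun g Hg => match Hg with
                        | or_introl HgH => or_introl (sE_rng G H g HgH)
                        | or_intror HgK => or_intror (sE_rng G K g HgK)
                        end |}.

Lemma edge_sub_finite_complete (Z : Ed G -> Prop) :
  (forall g h, Z g -> adj G g h -> Z h) -> fin_pred Z ->
  finite_complete (edge_sub Z).
Proof.
  intros Zadj [l Hl]. split; [split | split]; simpl.
  - intros X SX [f [<- Hf]] g Hg. apply (Zadj f); [exact Hf | left; auto].
  - intros Y TY [f [<- Hf]] g Hg. apply (Zadj f); [exact Hf | right; auto].
  - exists (flat_map (fun g => [src g; rng g]) l).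
    intros v [g [Hg Hv]]. apply in_flat_map. exists g. split; [auto |].
    destruct Hv as [<- | <-]; simpl; auto.
  - exists l. exact Hl.
Qed.

Lemma vertex_sub_finite_complete (P : V G -> Prop) :
  fin_pred P -> finite_complete (vertex_sub P).
Proof.
  intros HP. split; [split | split]; simpl; try exact HP.
  - intros X _ [f [_ []]].
  - intros Y _ [f [_ []]].
  - exists []. intros g [].
Qed.

Lemma union_sub_finite_complete (H K : subgraph G) :
  finite_complete H -> finite_complete K -> finite_complete (union_sub H K).
Proof.
  intros [[HS HT] [HV HE]] [[KS KT] [KV KE]].
  split; [split | split]; simpl; try (apply fin_pred_union; assumption).
  - intros X SX [f [fX [Hf | Kf]]] g gX;
      [left; apply (HS X) | right; apply (KS X)]; eauto.
  - intros Y TY [f [fY [Hf | Kf]]] g gY;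
      [left; apply (HT Y) | right; apply (KT Y)]; eauto.
Qed.

Lemma tame_edge_sub (e : Ed G) : tame G ->
  finite_complete (edge_sub (clos_refl_trans _ (adj G) e)).
Proof.
  intros G_tame. apply edge_sub_finite_complete.
  - intros g h Hg Hgh. eapply rt_trans; [exact Hg | apply rt_step, Hgh].
  - exact (component_fin G e G_tame).
Qed.

Lemma tame_union : tame G -> union_of_finite_complete G.
Proof.
  intros G_tame.
  exists {H : subgraph G | finite_complete H}, (@proj1_sig _ _).
  split; [| split; [| split; [| split]]].
  - constructor. exists (vertex_sub (fun _ => False)).
    apply vertex_sub_finite_complete. exists []. tauto.
  - intros [H HH]. exact HH.
  - intros [H HH] [K HK].
    exists (exist _ (union_sub H K) (union_sub_finite_complete H K HH HK)).
    split; split; simpl; auto.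
  - intros v.
    exists (exist _ _ (vertex_sub_finite_complete _ (fin_pred_single v))).
    reflexivity.
  - intros e. exists (exist _ _ (tame_edge_sub e G_tame)). apply rt_refl.
Qed.

End FiniteCompleteSubobjects.

Theorem mainTheorem1 (G : BiSepGraph) :
  tame G <-> union_of_finite_complete G.
Proof.
  split; [apply tame_union | apply union_tame].
Qed.
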